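(* For $\gamma>0$ let $\Theta^*$ be a random variable on $\mathbb S^1=\mathbb R/2\pi\mathbb Z$ with density $u^*$, where $u^*(\theta)=\frac1Z\Big(\frac{(e^{-2\pi\alpha}-1)e^{\alpha(\theta+2\sin\theta)}}{\int_0^{2\pi}e^{-\alpha(r+2\sin r)}dr}\int_0^\theta e^{-\alpha(r+2\sin r)}dr+e^{\alpha(\theta+2\sin\theta)}\Big)$, $\alpha=2/\gamma$, $Z$ a normalizer. Then for any constants $c>0$ and $\epsilon>0$ there exists $\gamma_0>0$ such that $\mathbb P[|\Theta^*-2\pi/3|>c]<\epsilon$ for all $0<\gamma<\gamma_0$ (distance measured on the circle).
   Context: $u^*$ is the invariant density of $d\theta=I_2(1+2\cos\theta)dt+\sqrt{\gamma I_2}dB_t$ on the circle (for any fixed $I_2>0$). *)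

From Stdlib Require Import Reals.
From Coquelicot Require Import Coquelicot.
Open Scope R_scope.

Definition alpha (gamma : R) : R := 2 / gamma.

Definition w_minus (gamma r : R) : R := exp (- alpha gamma * (r + 2 * sin r)).
Definition w_plus (gamma t : R) : R := exp (alpha gamma * (t + 2 * sin t)).

Definition u_unnorm (gamma theta : R) : R :=
  (exp (- 2 * PI * alpha gamma) - 1) * w_plus gamma theta
    / RInt (w_minus gamma) 0 (2 * PI)
    * RInt (w_minus gamma) 0 theta
  + w_plus gamma theta.

Definition Zc (gamma : R) : R := RInt (u_unnorm gamma) 0 (2 * PI).

(* The invariant density u^* on the fundamental domain [0, 2 pi). *)
Definition u_star (gamma theta : R) : R := u_unnorm gamma theta / Zc gamma.

Definition circ_dist (x y : R) : R := Rmin (Rabs (x - y)) (2 * PI - Rabs (x - y)).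

Definition prob_far (gamma c : R) : R :=
  RInt (fun theta => if Rlt_dec c (circ_dist theta (2 * PI / 3))
                     then u_star gamma theta else 0) 0 (2 * PI).

From Stdlib Require Import Reals Lra.
From Coquelicot Require Import Coquelicot.
Open Scope R_scope.

(** Write [pot x = x + 2 sin x], so that [w_minus g = exp (- alpha g * pot)] and
    [w_plus g = exp (alpha g * pot)], and [M] for the integral of [w_minus g]
    over [0, 2 PI].  Then
      [u_unnorm g t = (e^(alpha (pot t - 2 PI)) RInt_0^t e^(- alpha pot)
                       + RInt_t^(2 PI) e^(alpha (pot t - pot r)) dr) / M],
    whose first term is at most one.  Since [pot' = 1 + 2 cos], the potential
    rises on [0, 2PI/3], falls on [2PI/3, 4PI/3] and rises again, so for [t <= r]
    the exponent [pot t - pot r] never exceeds [pot_drop], and stays below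
    [pot_drop - pot_gap c] when [t] is at distance at least [c] from [2PI/3].
    This bounds [u_unnorm] by [4 PI e^(alpha (pot_drop - pot_gap c)) / M] away
    from [2PI/3], while integrating over [d]-neighbourhoods of [2PI/3] (for [t])
    and of [4PI/3] (for [r]) gives [Zc >= 4 d^2 e^(alpha (pot_drop - 6 d)) / M].
    With [d = pot_gap c / 12] the density away from [2PI/3] is
    [O(e^(- pot_gap c / gamma))]. *)

Lemma PI_gt_3 : 3 < PI.
Proof. generalize PI2_3_2; lra. Qed.

Lemma exp_le_exp x y : x <= y -> exp x <= exp y.
Proof. intros [H | ->]; [left; apply exp_increasing | right]; auto. Qed.

Lemma mul_exp_neg_lt_1 x : 0 < x -> x * exp (- x) < 1.
Proof.
  intros Hx. rewrite exp_Ropp.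
  assert (Hlt : 1 + x < exp x) by (apply exp_ineq1; lra).
  pose proof (exp_pos x).
  apply (Rmult_lt_reg_r (exp x)); auto.
  rewrite Rmult_assoc, Rinv_l by lra. lra.
Qed.

Lemma RInt_const_R (a b v : R) : RInt (fun _ => v) a b = (b - a) * v.
Proof. exact (RInt_const (V := R_CompleteNormedModule) a b v). Qed.

(** * The potential *)

Definition pot (x : R) : R := x + 2 * sin x.

Lemma pot_mvt x y : x < y ->
  exists z, pot y - pot x = (1 + 2 * cos z) * (y - x) /\ x < z < y.
Proof.
  intros Hxy. apply (MVT_cor2 pot (fun z => 1 + 2 * cos z)); auto.
  intros z _. apply is_derive_Reals. unfold pot. auto_derive; auto. ring.
Qed.

Lemma pot_lipschitz x y : Rabs (pot x - pot y) <= 3 * Rabs (x - y).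
Proof.
  assert (Hlt : forall a b, a < b -> Rabs (pot b - pot a) <= 3 * (b - a)).
  { intros a b Hab. destruct (pot_mvt a b Hab) as [z [-> _]].
    pose proof (COS_bound z). rewrite Rabs_mult, (Rabs_right (b - a)) by lra.
    apply Rmult_le_compat_r; [lra |]. apply Rabs_le; lra. }
  destruct (Rtotal_order x y) as [H | [-> | H]].
  - rewrite Rabs_minus_sym, (Rabs_left (x - y)) by lra.
    specialize (Hlt x y H). lra.
  - unfold Rminus. rewrite !Rplus_opp_r, Rabs_R0. lra.
  - rewrite (Rabs_right (x - y)) by lra. auto.
Qed.

Lemma pot_near a x d : Rabs (x - a) <= d -> pot a - 3 * d <= pot x <= pot a + 3 * d.
Proof.
  intros Hd. pose proof (pot_lipschitz x a).
  pose proof (Rle_abs (pot x - pot a)). pose proof (Rle_abs (- (pot x - pot a))).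
  rewrite Rabs_Ropp in *. lra.
Qed.

Lemma cos_gt_first t : 0 <= t < 2 * PI / 3 -> - (1/2) < cos t.
Proof.
  intros Ht. pose proof PI_gt_3.
  replace (- (1/2)) with (cos (PI - PI / 3))
    by (rewrite Rtrigo_facts.cos_pi_minus, cos_PI3; lra).
  apply cos_decreasing_1; lra.
Qed.

Lemma cos_lt_mid t : 2 * PI / 3 < t < 4 * PI / 3 -> cos t < - (1/2).
Proof.
  intros Ht. pose proof PI_gt_3.
  destruct (Rle_dec t PI).
  - replace (- (1/2)) with (cos (PI - PI / 3))
      by (rewrite Rtrigo_facts.cos_pi_minus, cos_PI3; lra).
    apply cos_decreasing_1; lra.
  - replace (- (1/2)) with (cos (PI + PI / 3))
      by (rewrite Rtrigo_facts.cos_pi_plus, cos_PI3; lra).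
    apply cos_increasing_1; lra.
Qed.

Lemma cos_gt_last t : 4 * PI / 3 < t <= 2 * PI -> - (1/2) < cos t.
Proof.
  intros Ht. pose proof PI_gt_3.
  replace (- (1/2)) with (cos (PI + PI / 3))
    by (rewrite Rtrigo_facts.cos_pi_plus, cos_PI3; lra).
  apply cos_increasing_1; lra.
Qed.

Lemma pot_increasing_first x y : 0 <= x -> x < y -> y <= 2 * PI / 3 -> pot x < pot y.
Proof.
  intros Hx Hxy Hy. destruct (pot_mvt x y Hxy) as [z [E Hz]].
  assert (- (1/2) < cos z) by (apply cos_gt_first; lra). nra.
Qed.

Lemma pot_decreasing_mid x y : 2 * PI / 3 <= x -> x < y -> y <= 4 * PI / 3 -> pot y < pot x.
Proof.
  intros Hx Hxy Hy. destruct (pot_mvt x y Hxy) as [z [E Hz]].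
  assert (cos z < - (1/2)) by (apply cos_lt_mid; lra). nra.
Qed.

Lemma pot_le_first x y : 0 <= x -> x <= y -> y <= 2 * PI / 3 -> pot x <= pot y.
Proof.
  intros Hx [Hxy | ->] Hy; [left; apply pot_increasing_first | right]; auto.
Qed.

Lemma pot_ge_mid x y : 2 * PI / 3 <= x -> x <= y -> y <= 4 * PI / 3 -> pot y <= pot x.
Proof.
  intros Hx [Hxy | ->] Hy; [left; apply pot_decreasing_mid | right]; auto.
Qed.

Lemma pot_le_last x y : 4 * PI / 3 <= x -> x <= y -> y <= 2 * PI -> pot x <= pot y.
Proof.
  intros Hx [Hxy | ->] Hy; [| lra].
  destruct (pot_mvt x y Hxy) as [z [E Hz]].
  assert (- (1/2) < cos z) by (apply cos_gt_last; lra). nra.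
Qed.

Lemma pot_ge_pot_4PI3 r : 2 * PI / 3 <= r <= 2 * PI -> pot (4 * PI / 3) <= pot r.
Proof.
  intros Hr. destruct (Rle_dec r (4 * PI / 3)).
  - apply pot_ge_mid; lra.
  - apply pot_le_last; lra.
Qed.

Lemma pot_range x : 0 <= x <= 2 * PI -> 0 <= pot x <= 2 * PI.
Proof.
  intros Hx. unfold pot. pose proof PI_gt_3. pose proof (SIN_bound x).
  destruct (Rle_dec x PI).
  - pose proof (sin_ge_0 x). lra.
  - pose proof (sin_le_0 x). lra.
Qed.

Definition pot_drop : R := pot (2 * PI / 3) - pot (4 * PI / 3).

Definition pot_gap (c : R) : R :=
  Rmin (pot (2 * PI / 3) - pot (2 * PI / 3 - c)) (pot (2 * PI / 3) - pot (2 * PI / 3 + c)).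

Lemma pot_drop_le : pot_drop <= 2 * PI.
Proof.
  pose proof PI_gt_3. unfold pot_drop.
  pose proof (pot_range (2 * PI / 3)). pose proof (pot_range (4 * PI / 3)). lra.
Qed.

Lemma pot_gap_pos c : 0 < c <= PI / 3 -> 0 < pot_gap c.
Proof.
  intros Hc. pose proof PI_gt_3. unfold pot_gap. apply Rmin_glb_lt.
  - pose proof (pot_increasing_first (2 * PI / 3 - c) (2 * PI / 3)). lra.
  - pose proof (pot_decreasing_mid (2 * PI / 3) (2 * PI / 3 + c)). lra.
Qed.

Lemma pot_gap_le_drop c : 0 < c <= PI / 3 -> pot_gap c <= pot_drop.
Proof.
  intros Hc. pose proof PI_gt_3. unfold pot_gap, pot_drop.
  pose proof (Rmin_r (pot (2 * PI / 3) - pot (2 * PI / 3 - c)) (pot (2 * PI / 3) - pot (2 * PI / 3 + c))).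
  pose proof (pot_ge_mid (2 * PI / 3 + c) (4 * PI / 3)). lra.
Qed.

Lemma pot_drop_far c t r : 0 < c <= PI / 3 -> 0 <= t -> c <= Rabs (t - 2 * PI / 3) ->
  t <= r <= 2 * PI -> pot t - pot r <= pot_drop - pot_gap c.
Proof.
  intros Hc Ht Hfar Hr. pose proof PI_gt_3.
  pose proof (Rmin_l (pot (2 * PI / 3) - pot (2 * PI / 3 - c)) (pot (2 * PI / 3) - pot (2 * PI / 3 + c))).
  pose proof (Rmin_r (pot (2 * PI / 3) - pot (2 * PI / 3 - c)) (pot (2 * PI / 3) - pot (2 * PI / 3 + c))).
  assert (pot (4 * PI / 3) <= pot (2 * PI / 3 + c)) by (apply pot_ge_mid; lra).
  unfold pot_drop, pot_gap in *.
  destruct (Rle_dec t (2 * PI / 3)).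
  - rewrite Rabs_left1 in Hfar by lra.
    assert (pot t <= pot (2 * PI / 3 - c)) by (apply pot_le_first; lra).
    destruct (Rle_dec r (2 * PI / 3)).
    + assert (pot t <= pot r) by (apply pot_le_first; lra). lra.
    + assert (pot (4 * PI / 3) <= pot r) by (apply pot_ge_pot_4PI3; lra). lra.
  - rewrite Rabs_right in Hfar by lra.
    destruct (Rle_dec t (4 * PI / 3)).
    + assert (pot t <= pot (2 * PI / 3 + c)) by (apply pot_ge_mid; lra).
      assert (pot (4 * PI / 3) <= pot r) by (apply pot_ge_pot_4PI3; lra). lra.
    + assert (pot t <= pot r) by (apply pot_le_last; lra). lra.
Qed.

(** * Estimates on the density *)

Section Density.

Variable g : R.

Lemma w_minus_continuous x : continuous (w_minus g) x.
Proof. apply (ex_derive_continuous (V := R_NormedModule)). unfold w_minus. auto_derive. auto. Qed.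

Lemma w_plus_continuous x : continuous (w_plus g) x.
Proof. apply (ex_derive_continuous (V := R_NormedModule)). unfold w_plus. auto_derive. auto. Qed.

Lemma ex_RInt_w_minus a b : ex_RInt (w_minus g) a b.
Proof. apply (ex_RInt_continuous (V := R_CompleteNormedModule)). intros; apply w_minus_continuous. Qed.

Lemma RInt_w_minus_Chasles a b c :
  RInt (w_minus g) a b + RInt (w_minus g) b c = RInt (w_minus g) a c.
Proof. apply (RInt_Chasles (V := R_CompleteNormedModule)); apply ex_RInt_w_minus. Qed.

Lemma RInt_w_minus_ge_0 a b : a <= b -> 0 <= RInt (w_minus g) a b.
Proof.
  intros Hab. apply RInt_ge_0; auto using ex_RInt_w_minus.
  intros; left; apply exp_pos.
Qed.

Lemma RInt_w_minus_continuous x : continuous (fun t => RInt (w_minus g) 0 t) x.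
Proof.
  apply (ex_derive_continuous (V := R_NormedModule)). exists (w_minus g x).
  apply (is_derive_RInt (V := R_NormedModule) _ _ 0).
  - apply filter_forall. intros; apply (RInt_correct (V := R_CompleteNormedModule)), ex_RInt_w_minus.
  - apply w_minus_continuous.
Qed.

Lemma u_unnorm_continuous x : continuous (u_unnorm g) x.
Proof.
  unfold u_unnorm.
  apply (continuous_plus (fun t => (exp (- 2 * PI * alpha g) - 1) * w_plus g t
      / RInt (w_minus g) 0 (2 * PI) * RInt (w_minus g) 0 t)); [| apply w_plus_continuous].
  apply (continuous_mult (fun t => (exp (- 2 * PI * alpha g) - 1) * w_plus g t
      / RInt (w_minus g) 0 (2 * PI))); [| apply RInt_w_minus_continuous].
  apply (continuous_mult (fun t => (exp (- 2 * PI * alpha g) - 1) * w_plus g t)); [| apply continuous_const].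
  apply (continuous_mult (fun _ => exp (- 2 * PI * alpha g) - 1)); [apply continuous_const | apply w_plus_continuous].
Qed.

Lemma ex_RInt_u_unnorm a b : ex_RInt (u_unnorm g) a b.
Proof. apply (ex_RInt_continuous (V := R_CompleteNormedModule)). intros; apply u_unnorm_continuous. Qed.

Lemma ex_RInt_u_star a b : ex_RInt (u_star g) a b.
Proof.
  apply (ex_RInt_continuous (V := R_CompleteNormedModule)). intros z _.
  apply (continuous_mult (u_unnorm g) (fun _ => / Zc g)); [apply u_unnorm_continuous | apply continuous_const].
Qed.

Let M := RInt (w_minus g) 0 (2 * PI).

Lemma M_pos : 0 < M.
Proof.
  pose proof PI_gt_3. apply RInt_gt_0; [lra | |].
  - intros; apply exp_pos.
  - intros; apply w_minus_continuous.
Qed.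

Lemma u_unnorm_eq t : u_unnorm g t =
  w_plus g t * (exp (- 2 * PI * alpha g) * RInt (w_minus g) 0 t + RInt (w_minus g) t (2 * PI)) / M.
Proof.
  pose proof M_pos as HM. unfold u_unnorm, M in *.
  rewrite <- (RInt_w_minus_Chasles 0 t (2 * PI)) in *. field. lra.
Qed.

Lemma u_unnorm_ge_0 t : 0 <= t <= 2 * PI -> 0 <= u_unnorm g t.
Proof.
  intros Ht. rewrite u_unnorm_eq. pose proof M_pos.
  pose proof (exp_pos (- 2 * PI * alpha g)).
  assert (0 <= RInt (w_minus g) 0 t) by (apply RInt_w_minus_ge_0; lra).
  assert (0 <= RInt (w_minus g) t (2 * PI)) by (apply RInt_w_minus_ge_0; lra).
  apply Rmult_le_pos; [| left; apply Rinv_0_lt_compat; auto].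
  apply Rmult_le_pos; [left; apply exp_pos | nra].
Qed.

Hypothesis g_pos : 0 < g.

Lemma alpha_pos : 0 < alpha g.
Proof. unfold alpha. apply Rdiv_lt_0_compat; lra. Qed.

Lemma M_le : M <= 2 * PI.
Proof.
  pose proof PI_gt_3. pose proof alpha_pos.
  assert (Hle : M <= RInt (fun _ => 1) 0 (2 * PI)).
  { apply RInt_le; [lra | apply ex_RInt_w_minus | apply (ex_RInt_const (V := R_CompleteNormedModule)) |].
    intros x Hx. rewrite <- exp_0. apply exp_le_exp.
    pose proof (pot_range x). fold (pot x). nra. }
  rewrite RInt_const_R in Hle. lra.
Qed.

Lemma w_plus_tail_le c t : 0 < c <= PI / 3 -> 0 <= t <= 2 * PI -> c <= Rabs (t - 2 * PI / 3) ->
  w_plus g t * RInt (w_minus g) t (2 * PI) <= 2 * PI * exp (alpha g * (pot_drop - pot_gap c)).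
Proof.
  intros Hc Ht Hfar. pose proof alpha_pos. pose proof PI_gt_3.
  rewrite <- (RInt_scal (V := R_CompleteNormedModule)) by apply ex_RInt_w_minus.
  assert (Hle : RInt (fun r => scal (w_plus g t) (w_minus g r)) t (2 * PI) <=
              RInt (fun _ => exp (alpha g * (pot_drop - pot_gap c))) t (2 * PI)).
  { apply RInt_le; [lra | | apply (ex_RInt_const (V := R_CompleteNormedModule)) |].
    - apply (ex_RInt_scal (V := R_CompleteNormedModule)), ex_RInt_w_minus.
    - intros r Hr. unfold scal; simpl; unfold mult; simpl.
      unfold w_plus, w_minus. rewrite <- exp_plus. apply exp_le_exp.
      replace (alpha g * (t + 2 * sin t) + - alpha g * (r + 2 * sin r))
        with (alpha g * (pot t - pot r)) by (unfold pot; ring).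
      apply Rmult_le_compat_l; [lra |]. apply pot_drop_far; lra. }
  rewrite RInt_const_R in Hle.
  eapply Rle_trans; [apply Hle |].
  pose proof (exp_pos (alpha g * (pot_drop - pot_gap c))). nra.
Qed.

Lemma u_unnorm_far_le c t : 0 < c <= PI / 3 -> 0 <= t <= 2 * PI -> c <= Rabs (t - 2 * PI / 3) ->
  u_unnorm g t <= 4 * PI * exp (alpha g * (pot_drop - pot_gap c)) / M.
Proof.
  intros Hc Ht Hfar. pose proof alpha_pos. pose proof PI_gt_3. pose proof M_pos. pose proof M_le.
  set (E := exp (alpha g * (pot_drop - pot_gap c))).
  assert (HE : 1 <= E).
  { rewrite <- exp_0. apply exp_le_exp. pose proof (pot_gap_le_drop c Hc). nra. }
  assert (Hhead : w_plus g t * exp (- 2 * PI * alpha g) <= 1).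
  { unfold w_plus. rewrite <- exp_plus, <- exp_0. apply exp_le_exp.
    pose proof (pot_range t Ht). unfold pot in *. nra. }
  assert (Hinit : RInt (w_minus g) 0 t <= M).
  { unfold M. rewrite <- (RInt_w_minus_Chasles 0 t (2 * PI)).
    assert (0 <= RInt (w_minus g) t (2 * PI)) by (apply RInt_w_minus_ge_0; lra). lra. }
  assert (0 <= RInt (w_minus g) 0 t) by (apply RInt_w_minus_ge_0; lra).
  pose proof (exp_pos (alpha g * (t + 2 * sin t))). pose proof (exp_pos (- 2 * PI * alpha g)).
  pose proof (w_plus_tail_le c t Hc Ht Hfar) as Htail. fold E in Htail.
  rewrite u_unnorm_eq. apply Rmult_le_compat_r; [left; apply Rinv_0_lt_compat; auto |].
  unfold w_plus in *. nra.
Qed.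

Lemma w_minus_tail_ge_near d t : 0 < d <= PI / 3 -> Rabs (t - 2 * PI / 3) <= d ->
  2 * d * exp (- alpha g * (pot (4 * PI / 3) + 3 * d)) <= RInt (w_minus g) t (2 * PI).
Proof.
  intros Hd Ht. pose proof alpha_pos. pose proof PI_gt_3.
  assert (Ht' : 2 * PI / 3 - d <= t <= 2 * PI / 3 + d)
    by (unfold Rabs in Ht; destruct Rcase_abs in Ht; lra).
  rewrite <- (RInt_w_minus_Chasles t (4 * PI / 3 - d) (2 * PI)).
  rewrite <- (RInt_w_minus_Chasles (4 * PI / 3 - d) (4 * PI / 3 + d) (2 * PI)).
  assert (0 <= RInt (w_minus g) t (4 * PI / 3 - d)) by (apply RInt_w_minus_ge_0; lra).
  assert (0 <= RInt (w_minus g) (4 * PI / 3 + d) (2 * PI)) by (apply RInt_w_minus_ge_0; lra).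
  assert (Hmid : RInt (fun _ => exp (- alpha g * (pot (4 * PI / 3) + 3 * d))) (4 * PI / 3 - d) (4 * PI / 3 + d)
                 <= RInt (w_minus g) (4 * PI / 3 - d) (4 * PI / 3 + d)).
  { apply RInt_le; [lra | apply (ex_RInt_const (V := R_CompleteNormedModule)) | apply ex_RInt_w_minus |].
    intros x Hx. apply exp_le_exp.
    assert (Rabs (x - 4 * PI / 3) <= d) by (unfold Rabs; destruct Rcase_abs; lra).
    pose proof (pot_near (4 * PI / 3) x d). unfold pot in *. nra. }
  rewrite RInt_const_R in Hmid. lra.
Qed.

Lemma u_unnorm_near_ge d t : 0 < d <= PI / 3 -> Rabs (t - 2 * PI / 3) <= d ->
  2 * d * exp (alpha g * (pot_drop - 6 * d)) / M <= u_unnorm g t.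
Proof.
  intros Hd Ht. pose proof alpha_pos. pose proof PI_gt_3. pose proof M_pos.
  assert (Ht' : 2 * PI / 3 - d <= t <= 2 * PI / 3 + d)
    by (unfold Rabs in Ht; destruct Rcase_abs in Ht; lra).
  set (E1 := exp (alpha g * (pot (2 * PI / 3) - 3 * d))).
  set (E2 := exp (- alpha g * (pot (4 * PI / 3) + 3 * d))).
  assert (Hsplit : exp (alpha g * (pot_drop - 6 * d)) = E1 * E2)
    by (unfold E1, E2, pot_drop; rewrite <- exp_plus; f_equal; ring).
  assert (Hw : E1 <= w_plus g t).
  { apply exp_le_exp. pose proof (pot_near (2 * PI / 3) t d Ht). unfold pot in *. nra. }
  pose proof (w_minus_tail_ge_near d t Hd Ht) as Htail. fold E2 in Htail.
  assert (0 <= exp (- 2 * PI * alpha g) * RInt (w_minus g) 0 t).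
  { apply Rmult_le_pos; [left; apply exp_pos | apply RInt_w_minus_ge_0; lra]. }
  assert (0 < E1) by apply exp_pos. assert (0 < E2) by apply exp_pos.
  rewrite Hsplit, u_unnorm_eq. apply Rmult_le_compat_r; [left; apply Rinv_0_lt_compat; auto |].
  apply Rle_trans with (E1 * RInt (w_minus g) t (2 * PI)); [nra |].
  assert (0 <= 2 * d * E2) by (apply Rmult_le_pos; lra).
  apply Rmult_le_compat; lra.
Qed.

Lemma Zc_ge d : 0 < d <= PI / 3 -> 4 * d ^ 2 * exp (alpha g * (pot_drop - 6 * d)) / M <= Zc g.
Proof.
  intros Hd. pose proof PI_gt_3. pose proof M_pos.
  set (a := 2 * PI / 3 - d). set (b := 2 * PI / 3 + d).
  set (L := 2 * d * exp (alpha g * (pot_drop - 6 * d)) / M).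
  assert (Hsplit : RInt (u_unnorm g) 0 a + (RInt (u_unnorm g) a b + RInt (u_unnorm g) b (2 * PI))
                   = Zc g).
  { unfold Zc. rewrite !(RInt_Chasles (V := R_CompleteNormedModule)); auto using ex_RInt_u_unnorm. }
  assert (0 <= RInt (u_unnorm g) 0 a).
  { apply RInt_ge_0; [unfold a; lra | apply ex_RInt_u_unnorm |]. intros; apply u_unnorm_ge_0; unfold a in *; lra. }
  assert (0 <= RInt (u_unnorm g) b (2 * PI)).
  { apply RInt_ge_0; [unfold b; lra | apply ex_RInt_u_unnorm |]. intros; apply u_unnorm_ge_0; unfold b in *; lra. }
  assert (Hnear : RInt (fun _ => L) a b <= RInt (u_unnorm g) a b).
  { apply RInt_le; [unfold a, b; lra | apply (ex_RInt_const (V := R_CompleteNormedModule)) | apply ex_RInt_u_unnorm |].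
    intros x Hx. apply u_unnorm_near_ge; auto. unfold a, b in Hx. unfold Rabs; destruct Rcase_abs; lra. }
  rewrite RInt_const_R in Hnear.
  replace (4 * d ^ 2 * exp (alpha g * (pot_drop - 6 * d)) / M) with ((b - a) * L)
    by (unfold a, b, L; field; lra).
  lra.
Qed.

Lemma u_star_far_le c t : 0 < c <= PI / 3 -> 0 <= t <= 2 * PI -> c <= Rabs (t - 2 * PI / 3) ->
  u_star g t <= 144 * PI * exp (- (pot_gap c / g)) / pot_gap c ^ 2.
Proof.
  intros Hc Ht Hfar. pose proof PI_gt_3. pose proof M_pos. pose proof alpha_pos.
  pose proof (pot_gap_pos c Hc). pose proof (pot_gap_le_drop c Hc). pose proof pot_drop_le.
  set (k := pot_gap c) in *. set (d := k / 12).
  assert (Hd : 0 < d <= PI / 3) by (unfold d; lra).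
  set (E := exp (alpha g * (pot_drop - 6 * d))).
  assert (HE : exp (alpha g * (pot_drop - k)) = E * exp (- (k / g))).
  { unfold E. rewrite <- exp_plus. f_equal. unfold d, alpha. field. lra. }
  pose proof (Zc_ge d Hd) as HZ. fold E in HZ.
  assert (HEpos : 0 < E) by apply exp_pos.
  assert (HL : 0 < 4 * d ^ 2 * E / M).
  { apply Rdiv_lt_0_compat; auto. apply Rmult_lt_0_compat; [nra | auto]. }
  pose proof (u_unnorm_far_le c t Hc Ht Hfar) as Hu. fold k in Hu.
  unfold u_star. apply Rle_trans with (4 * PI * exp (alpha g * (pot_drop - k)) / M / (4 * d ^ 2 * E / M)).
  - unfold Rdiv at 1. apply Rmult_le_compat.
    + apply u_unnorm_ge_0; lra.
    + left; apply Rinv_0_lt_compat; lra.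
    + exact Hu.
    + apply Rinv_le_contravar; lra.
  - right. rewrite HE. unfold d. field. split; lra.
Qed.

End Density.

(** * The far set *)

Lemma ex_RInt_cut_inside (f h : R -> R) c p q : p <= q -> ex_RInt f p q ->
  (forall x, p < x < q -> c < h x) ->
  ex_RInt (fun x => if Rlt_dec c (h x) then f x else 0) p q.
Proof.
  intros Hpq Hf Hin. apply (ex_RInt_ext (V := R_CompleteNormedModule) f); auto.
  intros x Hx. rewrite Rmin_left, Rmax_right in Hx by lra.
  destruct Rlt_dec as [_ | Hn]; [reflexivity | exfalso; apply Hn, Hin; auto].
Qed.

Lemma ex_RInt_cut_outside (f h : R -> R) c p q : p <= q ->
  (forall x, p < x < q -> h x <= c) ->
  ex_RInt (fun x => if Rlt_dec c (h x) then f x else 0) p q.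
Proof.
  intros Hpq Hout. apply (ex_RInt_ext (V := R_CompleteNormedModule) (fun _ => 0)).
  - intros x Hx. rewrite Rmin_left, Rmax_right in Hx by lra.
    destruct Rlt_dec as [Hlt | _]; [specialize (Hout x Hx); lra | reflexivity].
  - apply (ex_RInt_const (V := R_CompleteNormedModule)).
Qed.

Lemma ex_RInt_far (f : R -> R) c : 0 < c -> (forall a b, ex_RInt f a b) ->
  ex_RInt (fun x => if Rlt_dec c (circ_dist x (2 * PI / 3)) then f x else 0) 0 (2 * PI).
Proof.
  intros Hc Hf. pose proof PI_gt_3.
  assert (Hdist : forall x, circ_dist x (2 * PI / 3) <= Rabs (x - 2 * PI / 3)
                         /\ circ_dist x (2 * PI / 3) <= 2 * PI - Rabs (x - 2 * PI / 3))
    by (intros; split; [apply Rmin_l | apply Rmin_r]).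
  destruct (Rle_dec PI c).
  - apply ex_RInt_cut_outside; [lra |]. intros x _.
    destruct (Hdist x). lra.
  - set (q1 := Rmax 0 (2 * PI / 3 - c)).
    set (q3 := Rmin (2 * PI) (8 * PI / 3 - c)).
    assert (H1 : 0 <= q1 /\ 2 * PI / 3 - c <= q1 /\ (q1 = 0 \/ q1 = 2 * PI / 3 - c))
      by (unfold q1, Rmax; destruct Rle_dec; lra).
    assert (H3 : q3 <= 2 * PI /\ q3 <= 8 * PI / 3 - c /\ (q3 = 2 * PI \/ q3 = 8 * PI / 3 - c))
      by (unfold q3, Rmin; destruct Rle_dec; lra).
    apply (ex_RInt_Chasles (V := R_CompleteNormedModule) _ 0 q1).
    { apply ex_RInt_cut_inside; auto; [lra |]. intros x Hx. unfold circ_dist.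
      rewrite Rabs_left by lra. apply Rmin_glb_lt; lra. }
    apply (ex_RInt_Chasles (V := R_CompleteNormedModule) _ q1 (2 * PI / 3 + c)).
    { apply ex_RInt_cut_outside; [lra |]. intros x Hx. destruct (Hdist x).
      unfold Rabs in *; destruct Rcase_abs; lra. }
    apply (ex_RInt_Chasles (V := R_CompleteNormedModule) _ (2 * PI / 3 + c) q3).
    { apply ex_RInt_cut_inside; auto; [lra |]. intros x Hx. unfold circ_dist.
      rewrite Rabs_right by lra. apply Rmin_glb_lt; lra. }
    { apply ex_RInt_cut_outside; [lra |]. intros x Hx. destruct (Hdist x).
      rewrite Rabs_right in * by lra. lra. }
Qed.

Lemma prob_far_le g c : 0 < g -> 0 < c ->
  prob_far g c <= 288 * PI ^ 2 * exp (- (pot_gap (Rmin c (PI / 3)) / g)) / pot_gap (Rmin c (PI / 3)) ^ 2.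
Proof.
  intros Hg Hc. pose proof PI_gt_3.
  set (c' := Rmin c (PI / 3)).
  assert (Hc' : 0 < c' <= PI / 3) by (unfold c', Rmin; destruct Rle_dec; lra).
  assert (c' <= c) by apply Rmin_l.
  pose proof (pot_gap_pos c' Hc'). pose proof (exp_pos (- (pot_gap c' / g))).
  set (K := 144 * PI * exp (- (pot_gap c' / g)) / pot_gap c' ^ 2).
  assert (HK : 0 <= K) by (unfold K; apply Rlt_le, Rdiv_lt_0_compat; [nra | apply pow_lt; lra]).
  replace (288 * PI ^ 2 * exp (- (pot_gap c' / g)) / pot_gap c' ^ 2) with ((2 * PI - 0) * K)
    by (unfold K; field; lra).
  rewrite <- RInt_const_R. unfold prob_far.
  apply RInt_le; [lra | apply ex_RInt_far; auto using ex_RInt_u_star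
                 | apply (ex_RInt_const (V := R_CompleteNormedModule)) |].
  intros x Hx. destruct Rlt_dec as [Hfar | _]; [| exact HK].
  apply u_star_far_le; auto; [lra |].
  pose proof (Rmin_l (Rabs (x - 2 * PI / 3)) (2 * PI - Rabs (x - 2 * PI / 3))).
  unfold circ_dist in Hfar. lra.
Qed.

Theorem lemma4p5 :
  forall c eps : R, 0 < c -> 0 < eps ->
  exists gamma0 : R, 0 < gamma0 /\
    forall gamma : R, 0 < gamma -> gamma < gamma0 -> prob_far gamma c < eps.
Proof.
  intros c eps Hc Heps. pose proof PI_gt_3.
  set (k := pot_gap (Rmin c (PI / 3))).
  assert (Hk : 0 < k) by (apply pot_gap_pos; unfold Rmin; destruct Rle_dec; lra).
  assert (Hk3 : 0 < k ^ 3) by (apply pow_lt; lra).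
  exists (eps * k ^ 3 / (288 * PI ^ 2)). split; [apply Rdiv_lt_0_compat; nra |].
  intros g Hg Hg0. eapply Rle_lt_trans; [apply prob_far_le; auto |]. fold k.
  set (e := exp (- (k / g))).
  assert (Hek : e * k < g).
  { pose proof (mul_exp_neg_lt_1 (k / g) (Rdiv_lt_0_compat _ _ Hk Hg)) as Hlt. fold e in Hlt.
    replace (e * k) with (k / g * e * g) by (field; lra). nra. }
  assert (Hg1 : 288 * PI ^ 2 * g < eps * k ^ 3).
  { apply (Rmult_lt_compat_l (288 * PI ^ 2)) in Hg0; [| nra].
    replace (288 * PI ^ 2 * (eps * k ^ 3 / (288 * PI ^ 2))) with (eps * k ^ 3) in Hg0 by (field; lra).
    exact Hg0. }
  apply (Rmult_lt_reg_r (k ^ 3)); auto.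
  replace (288 * PI ^ 2 * e / k ^ 2 * k ^ 3) with (288 * PI ^ 2 * (e * k)) by (field; lra).
  nra.
Qed.
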